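(* Let $k$, $n$, and $d$ be positive integers with $n\geq 2d$, $\gcd(n,d)=1$, and $\frac{n}{d}<k$. If $G$ is a finite, simple, undirected, connected graph with $\chi(G)=k$ and $\chi_c(G)=\frac{n}{d}$, then $G$ has a $k$-coloring $f$ such that (1) for at least $\left(\frac{\chi(G)(\chi_c(G)+1-\chi(G))}{\chi_c(G)}\right)|V(G)|$ vertices $u$ of $G$, some full $f$-rainbow path begins at $u$, and (2) for each of the remaining vertices $v$ of $G$, some $f$-rainbow path of order $k-1$ begins at $v$.
   Context: For a positive integer $k$, $[k]=\{1,\dots,k\}$. A $k$-coloring of $G$ is a function $f:V(G)\to[k]$ with $f(u)\neq f(v)$ for every two adjacent vertices $u,v$; $\chi(G)$ is the minimum $k$ for which a $k$-coloring exists. For positive integers $n,d$ with $n\ge 2d$ and $\gcd(n,d)=1$, an $(n,d)$-coloring of $G$ is a function $c:V(G)\to[n]$ with $d\le |c(u)-c(v)|\le n-d$ for every two adjacent vertices $u,v$. The circular chromatic number $\chi_c(G)$ is the infimum (in fact a minimum) of $n/d$ over all $(n,d)$-colorings of $G$. For a $k$-coloring $f$, an $f$-rainbow path is a path in $G$ whose vertices have pairwise distinct colors under $f$; it is full if it has order (number of vertices) $k$. A path begins at $u$ if $u$ is one of its end vertices. *)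

From mathcomp Require Import all_boot all_order all_algebra.
Set Implicit Arguments. Unset Strict Implicit. Unset Printing Implicit Defensive.

Definition simple_graph (T : finType) (e : rel T) : Prop :=
  symmetric e /\ irreflexive e.

Definition connected_graph (T : finType) (e : rel T) : Prop :=
  forall x y : T, connect e x y.

Definition is_coloring (T : finType) (e : rel T) (k : nat) (f : T -> nat) : Prop :=
  (forall v, 1 <= f v <= k) /\ (forall u v, e u v -> f u != f v).

Definition chromatic_number (T : finType) (e : rel T) (k : nat) : Prop :=
  (exists f, is_coloring e k f) /\
  (forall j (f : T -> nat), is_coloring e j f -> k <= j).

Definition natdist (a b : nat) : nat := maxn (a - b) (b - a).

Definition is_circ_coloring (T : finType) (e : rel T) (n d : nat) (c : T -> nat) : Prop :=
  [/\ 0 < d, 2 * d <= n, coprime n d,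
      (forall v, 1 <= c v <= n) &
      (forall u v, e u v -> d <= natdist (c u) (c v) <= n - d)].

Definition circ_chromatic_number (T : finType) (e : rel T) (q : rat) : Prop :=
  (exists n d c, is_circ_coloring e n d c /\ q = (n%:Q / d%:Q)%R) /\
  (forall n d c, is_circ_coloring e n d c -> (q <= n%:Q / d%:Q)%R).

Definition is_graph_path (T : finType) (e : rel T) (p : seq T) : Prop :=
  match p with
  | [::] => False
  | x :: s => path e x s /\ uniq p
  end.

Definition rainbow_path (T : finType) (e : rel T) (f : T -> nat) (p : seq T) : Prop :=
  is_graph_path e p /\ uniq (map f p).

Definition begins_at (T : finType) (u : T) (p : seq T) : Prop :=
  match p with
  | [::] => False
  | x :: s => u = x \/ u = last x s
  end.

From mathcomp Require Import all_boot all_order all_algebra zify ring.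
From Stdlib Require Import ClassicalEpsilon Classical.
Import GRing.Theory Num.Theory.
Set Implicit Arguments. Unset Strict Implicit.

(* Work with colourings c : V -> Z_n in which adjacent colours are at circular
   distance at least d, and call an arc uv tight when c v = c u + d.  As n/d is
   the circular chromatic number, such a colouring can be chosen so that every
   vertex has a tight out-neighbour: if no vertex starts arbitrarily long tight
   walks, the tight digraph is acyclic and its height function perturbs c into
   a colouring of smaller ratio; otherwise, shifting the colours of the other
   vertices by the least slack of an edge leaving them enlarges the set of
   vertices that do.  For a shift t, f v = ((c v + t) mod n) / d + 1 is a
   k-colouring, and along a tight walk from v the colours c v + t, c v + t + d,
   ... have k - 1 distinct images under f, and k of them as soon as
   ((c v + t) mod n) mod d < n - (k - 1) d.  Each vertex satisfies this for at
   least k (n - (k - 1) d) shifts t, so averaging over t gives a shift that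
   works for a fraction k (n - (k - 1) d) / n = k (n/d + 1 - k) / (n/d) of the
   vertices. *)

Ltac case_ifs_lia :=
  repeat match goal with
  | |- context [if ?b then _ else _] =>
      lazymatch b with
      | context [if _ then _ else _] => fail
      | _ => let E := fresh "E" in case E: b
      end
  end; lia.

Lemma modn_lt2 a n : a < 2 * n -> a %% n = if a < n then a else a - n.
Proof.
move=> lt_a_2n; case: ifP => lt_an; first by rewrite modn_small.
have -> : a = (a - n) + n by lia.
by rewrite modnDr modn_small; lia.
Qed.

Lemma eq_divn_lt a b d : 0 < d -> a %/ d = b %/ d -> a < b + d.
Proof.
move=> d_gt0 eq_ab; rewrite (divn_eq a d) (divn_eq b d) eq_ab.
have := ltn_pmod a d_gt0; lia.
Qed.

Lemma leq_add_ltn_divn a b d : 0 < d -> a + d <= b -> a %/ d < b %/ d.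
Proof.
move=> d_gt0 le_adb; have := leq_div2r d le_adb.
by rewrite -{1}(mul1n d) addnC divnMDl.
Qed.

Lemma natdistSS a b : natdist a.+1 b.+1 = natdist a b.
Proof. rewrite /natdist; lia. Qed.

Lemma natdist_divn a b g N D : 0 < g -> D <= N ->
  D * g <= natdist a b <= N * g - D * g ->
  D <= natdist (a %/ g) (b %/ g) <= N - D.
Proof.
move=> g_gt0 le_DN.
have key x y : y <= x -> D * g <= x - y <= N * g - D * g ->
    D <= x %/ g - y %/ g <= N - D.
  move=> le_yx bounds.
  have lo : D * g + y <= x by lia.
  have hi : x <= (N - D) * g + y by rewrite mulnBl; lia.
  have := leq_div2r g lo; have := leq_div2r g hi.
  rewrite !divnMDl //; lia.
rewrite /natdist; case: (leqP b a) => [le_ba|lt_ab].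
- have := key a b le_ba; have := leq_div2r g le_ba; lia.
- have le_ab := ltnW lt_ab.
  have := key b a le_ab; have := leq_div2r g le_ab; lia.
Qed.

(* Upward distance from a to b in Z_n; adding n avoids truncated subtraction. *)
Definition cdist (n a b : nat) : nat := (b + n - a) %% n.

Lemma cdistE n a b : a < n -> b < n ->
  cdist n a b = if a <= b then b - a else b + n - a.
Proof.
move=> lt_an lt_bn; rewrite /cdist modn_lt2; last by lia.
case_ifs_lia.
Qed.

Lemma natdist_cdist n d a b : 0 < d -> a < n -> b < n ->
  (d <= natdist a b <= n - d) = (d <= cdist n a b <= n - d).
Proof.
move=> d_gt0 lt_an lt_bn; rewrite cdistE // /natdist.
by apply/idP/idP; case: ifP => le_ab /andP [lo hi]; apply/andP; split; lia.
Qed.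

Lemma cdist_addmod n a b s : a < n -> b < n -> s < n ->
  cdist n ((a + s) %% n) ((b + s) %% n) = cdist n a b.
Proof.
move=> lt_an lt_bn lt_sn; rewrite !cdistE ?ltn_mod; try lia.
rewrite !modn_lt2; try lia; case_ifs_lia.
Qed.

Lemma cdist_addmod_slack n d a b s : 0 < d -> a < n -> b < n ->
  d <= cdist n a b <= n - d -> s <= cdist n a b - d ->
  (d <= cdist n ((a + s) %% n) b <= n - d) /\
  (d <= cdist n b ((a + s) %% n) <= n - d).
Proof.
move=> d_gt0 lt_an lt_bn bounds slack.
have lt_cn : cdist n a b < n by rewrite /cdist ltn_mod; lia.
have lt_sn : s < n by lia.
move: bounds slack; rewrite !cdistE ?ltn_mod; try lia.
rewrite !modn_lt2; try lia; case_ifs_lia.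
Qed.

Lemma cdist_slack_tight n d a b : 0 < d -> a < n -> b < n ->
  d <= cdist n a b <= n - d ->
  b = ((a + (cdist n a b - d)) %% n + d) %% n.
Proof.
move=> d_gt0 lt_an lt_bn; rewrite !cdistE; try lia.
move=> bounds; rewrite (@modn_lt2 (a + _) n); last by case_ifs_lia.
rewrite modn_lt2; last by case_ifs_lia.
move: bounds; case_ifs_lia.
Qed.

Lemma cdist_eq_tight n d a b : 0 < d -> d < n -> a < n -> b < n ->
  cdist n a b = d -> b = (a + d) %% n.
Proof.
move=> d_gt0 lt_dn lt_an lt_bn; rewrite cdistE // modn_lt2; last by lia.
case_ifs_lia.
Qed.

Lemma cdist_eq_tight_rev n d a b : 0 < d -> d < n -> a < n -> b < n ->
  cdist n a b = n - d -> a = (b + d) %% n.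
Proof.
move=> d_gt0 lt_dn lt_an lt_bn; rewrite cdistE // modn_lt2; last by lia.
case_ifs_lia.
Qed.

Lemma cdist_scale M n a b p q : 0 < M -> a < n -> b < n -> a != b ->
  0 < p < M -> 0 < q < M ->
  cdist (M * n) (M * a + p) (M * b + q) = M * cdist n a b + q - p.
Proof.
move=> M_gt0 lt_an lt_bn neq_ab p_bd q_bd.
have la : M * a.+1 <= M * n by rewrite leq_mul2l lt_an orbT.
have lb : M * b.+1 <= M * n by rewrite leq_mul2l lt_bn orbT.
rewrite !mulnS in la lb.
rewrite !cdistE; try lia.
case: (ltngtP a b) => [lt_ab|lt_ba|eq_ab].
- have : M * a.+1 <= M * b by rewrite leq_mul2l lt_ab orbT.
  rewrite mulnS.
  have : M * (b - a) = M * b - M * a by rewrite mulnBr.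
  case_ifs_lia.
- have : M * b.+1 <= M * a by rewrite leq_mul2l lt_ba orbT.
  rewrite mulnS.
  have : M * (b + n - a) = M * b + M * n - M * a by rewrite mulnBr mulnDr.
  case_ifs_lia.
- by rewrite eq_ab eqxx in neq_ab.
Qed.

Lemma cdist_scale_bounds M n d a p q : 0 < d -> 2 * d < n -> 1 < M ->
  0 < p < M -> 0 < q < M -> d <= a <= n - d ->
  (a = d -> p < q) -> (a = n - d -> q < p) ->
  M * d + 1 <= M * a + q - p <= M * n - (M * d + 1).
Proof.
move=> d_gt0 lt_2dn M_gt1 p_bd q_bd a_bd lo_tight hi_tight.
have e1 : M * (n - d) = M * n - M * d by rewrite mulnBr.
have e2 : M * (n - d - 1) = M * n - M * d - M by rewrite !mulnBr muln1.
have e3 : M * (d + 1) = M * d + M by rewrite mulnDr muln1.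
have f1 : M * d <= M * a by rewrite leq_mul2l; lia.
have f2 : M * a <= M * (n - d) by rewrite leq_mul2l; lia.
have f3 : M * (d + 1) <= M * (n - d) by rewrite leq_mul2l; lia.
have f4 : M <= M * d by rewrite -{1}(muln1 M) leq_mul2l; lia.
have [eq_ad|lt_da] : a = d \/ d < a by lia.
  by have := lo_tight eq_ad; subst a; lia.
have [eq_a|lt_a] : a = n - d \/ a < n - d by lia.
  by have := hi_tight eq_a; subst a; lia.
have g1 : M * (d + 1) <= M * a by rewrite leq_mul2l; lia.
have g2 : M * a <= M * (n - d - 1) by rewrite leq_mul2l; lia.
lia.
Qed.

Lemma ratio_gt_scaled M n d : 0 < d -> 0 < n -> 0 < M ->
  ~ (n%:Q / d%:Q <= (M * n)%N%:Q / (M * d + 1)%N%:Q)%R.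
Proof.
move=> d_gt0 n_gt0 M_gt0.
rewrite ler_pdivrMr ?ltr0n ?addn1 // mulrAC ler_pdivlMr ?ltr0n //.
rewrite -!natrM ler_nat; nia.
Qed.

Lemma crossing_edge (T : finType) (e : rel T) (U : {set T}) x y :
  symmetric e -> connected_graph e -> x \in U -> y \notin U ->
  exists u w, [&& e u w, u \in U & w \notin U].
Proof.
move=> e_sym e_conn xU yU.
apply: NNPP => no_edge.
have U_closed : closed e (mem U).
  move=> u w e_uw; apply/idP/idP => Uu; apply/negPn/negP => Uw.
  - by apply: no_edge; exists u, w; rewrite e_uw Uu Uw.
  - by apply: no_edge; exists w, u; rewrite e_sym e_uw Uu Uw.
by move: yU; rewrite -(closed_connect U_closed (e_conn x y)) xU.
Qed.

Lemma sum_card_swap (I J : finType) (P : I -> J -> bool) :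
  \sum_i #|[set j | P i j]| = \sum_j #|[set i | P i j]|.
Proof.
have card_sum (A : finType) (Q : pred A) :
    #|[set x | Q x]| = \sum_x (if Q x then 1 else 0).
  by rewrite -sum1dep_card big_mkcond.
under eq_bigr => i _ do rewrite card_sum.
by rewrite exchange_big; apply: eq_bigr => j _; rewrite card_sum.
Qed.

Lemma exists_dense_index (I J : finType) (P : I -> J -> bool) K (i0 : I) :
  (forall j, K <= #|[set i | P i j]|) ->
  exists i, #|J| * K <= #|I| * #|[set j | P i j]|.
Proof.
move=> dense.
have [im _ im_max] := @arg_maxnP _ i0 xpredT (fun i => #|[set j | P i j]|) isT.
exists im.
have lo : #|J| * K <= \sum_j #|[set i | P i j]|.
  by rewrite -sum_nat_const; apply: leq_sum => j _; exact: dense.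
apply: (leq_trans lo); rewrite -sum_card_swap -sum_nat_const.
by apply: leq_sum => i _; exact: im_max.
Qed.

Section CircularColourings.
Variables (T : finType) (e : rel T).

(* An (n, d)-colouring with colours shifted down to [0, n) and the
   distance condition read around Z_n. *)
Definition circ_col n d (c : T -> nat) : Prop :=
  (forall v, c v < n) /\ (forall u v, e u v -> d <= cdist n (c u) (c v) <= n - d).

Definition circ_ratio_min n d : Prop :=
  forall N D c, 0 < D -> 2 * D <= N -> circ_col N D c ->
  (n%:Q / d%:Q <= N%:Q / D%:Q)%R.

Lemma circ_col_reduce N D c : 0 < D -> 2 * D <= N -> circ_col N D c ->
  exists N' D' c', is_circ_coloring e N' D' c' /\ (N'%:Q / D'%:Q = N%:Q / D%:Q)%R.
Proof.
move=> D_gt0 le_2DN [c_lt c_dist].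
pose g := gcdn N D.
have g_gt0 : 0 < g by rewrite gcdn_gt0 D_gt0 orbT.
pose N' := N %/ g; pose D' := D %/ g.
have EN : N = N' * g by rewrite divnK // dvdn_gcdl.
have ED : D = D' * g by rewrite divnK // dvdn_gcdr.
have D'_gt0 : 0 < D' by move: D_gt0; rewrite ED; case: (D').
have le_2DN' : 2 * D' <= N' by rewrite -(leq_pmul2r g_gt0) -mulnA -ED -EN.
have cop : coprime N' D'.
  have := muln_gcdl N' D' g; rewrite -EN -ED -/g => E.
  by rewrite /coprime -(eqn_pmul2r g_gt0) mul1n E.
clearbody N' D'.
exists N', D', (fun v => (c v %/ g).+1); split.
- split => // [v|u v e_uv].
  + by apply/andP; split => //; rewrite ltn_divLR // -EN.
  + rewrite natdistSS; apply: natdist_divn => //; first lia.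
    by have := c_dist u v e_uv; rewrite -natdist_cdist // -?ED -?EN.
- rewrite EN ED -!pmulrn !natrM; field.
  by rewrite !pnatr_eq0; apply/andP; split; lia.
Qed.

Lemma circ_chromatic_ratio_min n d :
  circ_chromatic_number e (n%:Q / d%:Q)%R -> circ_ratio_min n d.
Proof.
move=> [_ chic_min] N D c D_gt0 le_2DN c_col.
have [N' [D' [c' [c'_col <-]]]] := circ_col_reduce D_gt0 le_2DN c_col.
exact: chic_min c'_col.
Qed.

Lemma circ_col_of_circ_chromatic n d : 0 < d -> coprime n d ->
  circ_chromatic_number e (n%:Q / d%:Q)%R -> exists c, circ_col n d c.
Proof.
move=> d_gt0 cop [[n0 [d0 [c0 [[d0_gt0 _ cop0 c0_bd c0_dist] E]]]] _].
have E' : n * d0 = n0 * d.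
  move/eqP: E; rewrite eqr_div ?pnatr_eq0 -?lt0n // -!pmulrn -!natrM eqr_nat.
  by move/eqP.
have dvd_d_d0 : d %| d0.
  have : d %| n * d0 by rewrite E' dvdn_mull.
  by rewrite Gauss_dvdr // coprime_sym.
have dvd_d0_d : d0 %| d.
  have : d0 %| n0 * d by rewrite -E' dvdn_mull.
  by rewrite Gauss_dvdr // coprime_sym.
have Ed : d0 = d.
  by have := dvdn_leq d_gt0 dvd_d0_d; have := dvdn_leq d0_gt0 dvd_d_d0; lia.
subst d0.
have En : n0 = n by apply/eqP; rewrite -(eqn_pmul2r d_gt0) E'.
subst n0.
exists (fun v => c0 v - 1); split => [v|u v e_uv]; first by have := c0_bd v; lia.
have := c0_bd u; have := c0_bd v => bd_v bd_u.
rewrite -natdist_cdist; try lia.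
have -> : natdist (c0 u - 1) (c0 v - 1) = natdist (c0 u) (c0 v) by rewrite /natdist; lia.
exact: c0_dist.
Qed.

Lemma coloring_of_circ_col n d c K t : 0 < d -> 0 < n -> circ_col n d c ->
  t < n -> n <= K * d -> is_coloring e K (fun v => ((c v + t) %% n) %/ d + 1).
Proof.
move=> d_gt0 n_gt0 [c_lt c_dist] lt_tn le_nKd.
split => [v|u v e_uv].
- rewrite addn1 /= ltn_divLR //.
  by have := ltn_pmod (c v + t) n_gt0; lia.
- have := c_dist u v e_uv.
  rewrite -(cdist_addmod (s := t)) // -natdist_cdist ?ltn_pmod // /natdist => far.
  set a := (c u + t) %% n; set b := (c v + t) %% n.
  have [le_adb|le_bda] : a + d <= b \/ b + d <= a by lia.
  + by have := leq_add_ltn_divn d_gt0 le_adb; lia.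
  + by have := leq_add_ltn_divn d_gt0 le_bda; lia.
Qed.

Lemma chromatic_le_circ_col k n d c K : (forall j f, is_coloring e j f -> k <= j) ->
  0 < d -> 0 < n -> circ_col n d c -> n <= K * d -> k <= K.
Proof.
move=> chi_min d_gt0 n_gt0 c_col le_nKd.
exact: chi_min (coloring_of_circ_col (t := 0) d_gt0 n_gt0 c_col n_gt0 le_nKd).
Qed.

Section TightArcs.
Variables (n d : nat) (c : T -> nat).

Definition tight u v : bool := e u v && (c v == (c u + d) %% n).

Fixpoint tight_walk m v : bool :=
  if m is m'.+1 then [exists w, tight v w && tight_walk m' w] else true.

Definition endless v : Prop := forall m, tight_walk m v.

Definition endlessb v : bool :=
  if excluded_middle_informative (endless v) then true else false.

Lemma endlessP v : reflect (endless v) (endlessb v).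
Proof. by rewrite /endlessb; case: excluded_middle_informative => h; constructor. Qed.

Lemma tight_walk_le m m' v : m' <= m -> tight_walk m v -> tight_walk m' v.
Proof.
elim: m m' v => [|m IH] [|m'] v //= le_m'm /existsP [w /andP [vw walk_w]].
by apply/existsP; exists w; rewrite vw (IH m').
Qed.

Lemma endless_tight v w : tight v w -> endless w -> endless v.
Proof.
by move=> vw endless_w [|m] //=; apply/existsP; exists w; rewrite vw endless_w.
Qed.

Lemma endless_succ v : endless v -> exists2 w, tight v w & endless w.
Proof.
move=> endless_v; apply: NNPP => no_succ.
have /fin_all_exists [f f_fails] : forall w, exists m, tight v w -> ~~ tight_walk m w.
  move=> w; case: (classic (endless w)) => [endless_w|/not_all_ex_not [m /negP fails]].
    by exists 0 => vw; case: no_succ; exists w.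
  by exists m.
have /existsP [w /andP [vw walk_w]] := endless_v (\max_w f w).+1.
by have := f_fails w vw; rewrite (tight_walk_le (leq_bigmax w) walk_w).
Qed.

(* Without endless vertices the tight digraph is acyclic: take for h v the
   length of the longest tight walk from v. *)
Lemma tight_height : (forall v, ~ endless v) ->
  exists B (h : T -> nat), (forall v, h v < B) /\ (forall u v, tight u v -> h v < h u).
Proof.
move=> none_endless.
have /fin_all_exists [f f_fails] : forall v, exists m, ~~ tight_walk m v.
  by move=> v; have [m /negP fails] := not_all_ex_not _ _ (none_endless v); exists m.
pose B := \max_v f v.
have B_fails v : ~~ tight_walk B v.
  apply/negP => walk_v.
  by have := f_fails v; rewrite (tight_walk_le (leq_bigmax v) walk_v).
have B_gt0 (v : T) : 0 < B by case: (posnP B) (B_fails v) => // ->.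
pose h v := \max_(i : 'I_B | tight_walk i v) (i : nat).
exists B, h; split=> [v|u v uv].
  apply: (@leq_ltn_trans B.-1); last by have := B_gt0 v; lia.
  by apply/bigmax_leqP => i _; have := ltn_ord i; lia.
have nonempty : 0 < #|[pred i : 'I_B | tight_walk i v]|.
  by apply/card_gt0P; exists (Ordinal (B_gt0 v)).
have [i0 walk_i0 max_i0] := eq_bigmax_cond (fun i : 'I_B => (i : nat)) nonempty.
have -> : h v = i0 by rewrite /h -max_i0.
have walk_u : tight_walk i0.+1 u.
  by apply/existsP; exists v; rewrite uv; move: walk_i0; rewrite inE.
have lt_i0B : i0.+1 < B.
  rewrite ltnNge; apply/negP => le_B.
  by have := B_fails u; rewrite (tight_walk_le le_B walk_u).
exact: (leq_bigmax_cond (F := fun i : 'I_B => (i : nat)) (Ordinal lt_i0B) walk_u).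
Qed.

End TightArcs.

Lemma endless_agree n d c c' : (forall v, endless n d c v -> c' v = c v) ->
  forall v, endless n d c v -> endless n d c' v.
Proof.
move=> agree v endless_v m; elim: m v endless_v => [//|m IH] v endless_v /=.
have [w vw endless_w] := endless_succ endless_v.
apply/existsP; exists w; rewrite IH // andbT.
by move: vw; rewrite /tight !agree.
Qed.

Section Perturbation.
Variables (n d : nat).
Hypotheses (d_gt0 : 0 < d) (lt_2dn : 2 * d < n) (e_sym : symmetric e).

(* The height h breaks the ties along tight arcs, so the least distance grows
   from B.+2 * d to B.+2 * d + 1. *)
Lemma refine_circ_col c B (h : T -> nat) : circ_col n d c ->
  (forall v, h v < B) -> (forall u v, tight n d c u v -> h v < h u) ->
  circ_col (B.+2 * n) (B.+2 * d + 1) (fun v => B.+2 * c v + (B - h v)).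
Proof.
move=> [c_lt c_dist] h_lt h_tight; split => [v|u v e_uv].
  have : B.+2 * (c v).+1 <= B.+2 * n by rewrite leq_mul2l c_lt orbT.
  by rewrite mulnS; have := h_lt v; lia.
have far := c_dist u v e_uv.
have [cu_lt cv_lt] := (c_lt u, c_lt v).
have [hu_lt hv_lt] := (h_lt u, h_lt v).
have neq_cuv : c u != c v.
  by apply/eqP => E; move: far; rewrite E cdistE // leqnn subnn; lia.
rewrite cdist_scale //; try lia.
apply: cdist_scale_bounds => //; try lia.
- move=> E; have := h_tight u v.
  rewrite /tight e_uv (cdist_eq_tight d_gt0 _ cu_lt cv_lt E) ?eqxx; last lia.
  by move=> /(_ isT); lia.
- move=> E; have := h_tight v u.
  rewrite /tight e_sym e_uv (cdist_eq_tight_rev d_gt0 _ cu_lt cv_lt E) ?eqxx; last lia.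
  by move=> /(_ isT); lia.
Qed.

Lemma exists_endless c : circ_col n d c -> circ_ratio_min n d ->
  exists v, endless n d c v.
Proof.
move=> c_col ratio_min; apply: NNPP => no_endless.
have [B [h [h_lt h_tight]]] : exists B (h : T -> nat),
    (forall v, h v < B) /\ (forall u v, tight n d c u v -> h v < h u).
  by apply: tight_height => v endless_v; apply: no_endless; exists v.
apply: (@ratio_gt_scaled B.+2 n d) => //; try lia.
apply: ratio_min (refine_circ_col c_col h_lt h_tight); first lia.
have : B.+2 * (2 * d + 1) <= B.+2 * n by rewrite leq_mul2l; lia.
by rewrite mulnDr muln1; nia.
Qed.

Lemma shift_circ_col c (U : {set T}) s : circ_col n d c -> s < n ->
  (forall u w, e u w -> u \in U -> w \notin U -> s <= cdist n (c u) (c w) - d) ->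
  circ_col n d (fun v => if v \in U then (c v + s) %% n else c v).
Proof.
move=> [c_lt c_dist] lt_sn slack; split => [v|u v e_uv].
  by case: ifP => _ //; rewrite ltn_mod; lia.
case: ifP => Uu; case: ifP => Uv.
- by rewrite cdist_addmod //; exact: c_dist.
- by have [] := cdist_addmod_slack d_gt0 (c_lt u) (c_lt v) (c_dist u v e_uv)
    (slack u v e_uv Uu (negbT Uv)).
- have e_vu : e v u by rewrite e_sym.
  by have [] := cdist_addmod_slack d_gt0 (c_lt v) (c_lt u) (c_dist v u e_vu)
    (slack v u e_vu Uv (negbT Uu)).
- exact: c_dist.
Qed.

(* Shift the colours of the non-endless vertices up by the least slack of an
   edge leaving them: that edge becomes a tight arc into an endless vertex. *)
Lemma shrink_non_endless c : connected_graph e -> circ_col n d c ->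
  (exists v, endless n d c v) -> (exists v, ~ endless n d c v) ->
  exists c', circ_col n d c' /\
    [set v | ~~ endlessb n d c' v] \proper [set v | ~~ endlessb n d c v].
Proof.
move=> e_conn c_col [g endless_g] [b not_endless_b].
set U := [set v | ~~ endlessb n d c v].
have notU v : (v \notin U) = endlessb n d c v by rewrite inE negbK.
have bU : b \in U by rewrite inE; apply/negP => /endlessP.
have gU : g \notin U by rewrite notU; apply/endlessP.
have [u0 [w0 cross0]] := crossing_edge e_sym e_conn bU gU.
pose crossing (p : T * T) := [&& e p.1 p.2, p.1 \in U & p.2 \notin U].
pose slack (p : T * T) := cdist n (c p.1) (c p.2) - d.
have [[u1 w1] cross1 slack_min] := @arg_minnP _ (u0, w0) crossing slack cross0.
case/and3P: cross1 => /= e_uw1 Uu1 Uw1.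
have [c_lt c_dist] := c_col.
set s := slack (u1, w1).
have lt_sn : s < n.
  have : cdist n (c u1) (c w1) < n by rewrite ltn_pmod //; lia.
  by rewrite /s /slack /=; lia.
pose c' v := if v \in U then (c v + s) %% n else c v.
have c'_col : circ_col n d c'.
  apply: shift_circ_col => // u w e_uw Uu Uw.
  by apply: (slack_min (u, w)); rewrite /crossing /= e_uw Uu Uw.
have keep v : endless n d c v -> endless n d c' v.
  by apply: endless_agree => x /endlessP; rewrite /c' -notU => /negbTE ->.
have tight1 : tight n d c' u1 w1.
  rewrite /tight e_uw1 /c' Uu1 (negbTE Uw1) /= /s /slack /=.
  by rewrite -cdist_slack_tight // c_dist.
exists c'; split => //; apply/properP; split.
- by apply/subsetP => v; rewrite !inE; apply: contra => /endlessP /keep /endlessP.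
- exists u1 => //; rewrite inE negbK; apply/endlessP.
  by apply: endless_tight tight1 _; apply: keep; apply/endlessP; rewrite -notU.
Qed.

Lemma exists_tight_successors c : connected_graph e -> circ_ratio_min n d ->
  circ_col n d c -> exists c', circ_col n d c' /\ forall v, exists w, tight n d c' v w.
Proof.
move=> e_conn ratio_min.
suff : forall m c, #|[set v | ~~ endlessb n d c v]| < m -> circ_col n d c ->
    exists c', circ_col n d c' /\ forall v, exists w, tight n d c' v w.
  by apply; exact: ltnSn.
elim=> [//|m IH] {}c lt_m c_col.
case: (classic (exists v, ~ endless n d c v)) => [some_not|all_endless].
- have [c1 [c1_col shrink]] :=
    shrink_non_endless e_conn c_col (exists_endless c_col ratio_min) some_not.
  by apply: (IH c1 _ c1_col); have := proper_card shrink; lia.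
- exists c; split => // v.
  have endless_v : endless n d c v by apply: NNPP => not_v; apply: all_endless; exists v.
  by have [w vw _] := endless_succ endless_v; exists w.
Qed.

End Perturbation.

End CircularColourings.

Lemma map_traject_iota (T U : Type) (F : T -> U) (g : T -> T) x m :
  map F (traject g x m) = map (fun j => F (iter j g x)) (iota 0 m).
Proof.
elim: m x => [//|m IH] x /=; rewrite IH; congr cons.
rewrite -[1]addn0 iotaDl -map_comp.
by apply: eq_map => j /=; rewrite add0n -iterS iterSr.
Qed.

(* When x mod d >= n - (k - 1) * d the walk 0, d, ..., (k - 1) * d started
   at x wraps around Z_n back into the interval of width d containing x. *)
Lemma divn_addmod_neq n d k x j1 j2 : 0 < d -> 1 < k ->
  (k - 1) * d < n -> n < k * d -> x < n -> j1 < j2 < k ->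
  (j2 - j1 <= k - 2 \/ x %% d < n - (k - 1) * d) ->
  ((x + j1 * d) %% n) %/ d != ((x + j2 * d) %% n) %/ d.
Proof.
move=> d_gt0 k_gt1 lt_k1d_n lt_n_kd lt_xn /andP [lt_j12 lt_j2k] short_or_low.
have ek : k * d = d + (k - 1) * d by rewrite -mulSn; congr (_ * _); lia.
have ek2 : (k - 1) * d = d + (k - 2) * d by rewrite -mulSn; congr (_ * _); lia.
have f1 : d + j1 * d <= j2 * d by rewrite -mulSn leq_mul2r; lia.
have f2 : j2 * d <= (k - 1) * d by rewrite leq_mul2r; lia.
have f3 : j2 - j1 <= k - 2 -> j2 * d - j1 * d <= (k - 2) * d.
  by move=> short; rewrite -mulnBl leq_mul2r short orbT.
have fx : x %/ d * d + x %% d = x by rewrite -divn_eq.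
have := ltn_pmod x d_gt0 => lt_xd.
rewrite !modn_lt2; try lia.
apply/negP => /eqP E.
have := eq_divn_lt d_gt0 E; have := eq_divn_lt d_gt0 (esym E).
case: ifP E => wrap1; case: ifP => wrap2 E lt12 lt21; try lia.
case: short_or_low => [short|low]; first by have := f3 short; lia.
have [j1_0|j1_gt0] : j1 = 0 \/ 0 < j1 by lia.
- subst j1; rewrite mul0n addn0 in E wrap1 lt12 lt21.
  have [j2_max|lt_j2] : j2 = k - 1 \/ j2 < k - 1 by lia.
  + subst j2; have := leq_trunc_div (x + (k - 1) * d - n) d.
    by rewrite -E; lia.
  + by have := f3 ltac:(lia); lia.
- by have := f3 ltac:(lia); lia.
Qed.

Section TightRainbowPaths.
Variables (T : finType) (e : rel T) (n d : nat) (c : T -> nat).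
Hypothesis tight_out : forall v, exists w, tight e n d c v w.

Definition tight_succ (v : T) : T := odflt v [pick w | tight e n d c v w].

Lemma tight_succP v : tight e n d c v (tight_succ v).
Proof.
rewrite /tight_succ; case: pickP => [w //|no_succ].
by have [w vw] := tight_out v; rewrite no_succ in vw.
Qed.

Lemma col_iter_tight_succ t j v :
  (c (iter j tight_succ v) + t) %% n = ((c v + t) %% n + j * d) %% n.
Proof.
elim: j => [|j IH]; first by rewrite mul0n addn0 modn_mod.
rewrite iterS; have /andP [_ /eqP ->] := tight_succP (iter j tight_succ v).
rewrite modnDml addnAC -modnDml IH modnDml mulSn.
by congr (_ %% _); lia.
Qed.

Lemma rainbow_traject (F : T -> nat) v m : 0 < m ->
  uniq (map F (traject tight_succ v m)) ->
  rainbow_path e F (traject tight_succ v m).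
Proof.
case: m => // m _ uniq_F; split => //; split; last exact: map_uniq uniq_F.
apply: sub_path (fpath_traject tight_succ v m) => x y /eqP <-.
by have /andP [] := tight_succP x.
Qed.

Lemma tight_rainbow_path k t v m : 0 < d -> 1 < k ->
  (k - 1) * d < n -> n < k * d -> 0 < m -> m <= k ->
  (m < k \/ ((c v + t) %% n) %% d < n - (k - 1) * d) ->
  exists p, rainbow_path e (fun v => ((c v + t) %% n) %/ d + 1) p /\
    size p = m /\ begins_at v p.
Proof.
move=> d_gt0 k_gt1 lt_k1d_n lt_n_kd m_gt0 le_mk short_or_low.
exists (traject tight_succ v m); split; last first.
  by rewrite size_traject; case: (m) m_gt0 => // m' _; split => //; left.
apply: rainbow_traject => //.
rewrite map_traject_iota map_inj_in_uniq ?iota_uniq // => j1 j2.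
rewrite !mem_iota !add0n => /andP [_ lt_j1m] /andP [_ lt_j2m] /= /eqP.
rewrite eqn_add2r !col_iter_tight_succ => /eqP E.
have lt_xn : (c v + t) %% n < n by rewrite ltn_pmod // (leq_ltn_trans _ lt_k1d_n).
have neq j j' : j < j' -> j' < m ->
    ((c v + t) %% n + j * d) %% n %/ d != ((c v + t) %% n + j' * d) %% n %/ d.
  move=> lt_jj' lt_j'm; apply: (divn_addmod_neq d_gt0 k_gt1 lt_k1d_n lt_n_kd lt_xn).
    by rewrite lt_jj' (leq_trans lt_j'm le_mk).
  case: short_or_low => [lt_mk|]; [left|by right].
  by clear -lt_jj' lt_j'm lt_mk; lia.
case: (ltngtP j1 j2) => // [lt_j12|lt_j21].
- by have := neq j1 j2 lt_j12 lt_j2m; rewrite E eqxx.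
- by have := neq j2 j1 lt_j21 lt_j1m; rewrite E eqxx.
Qed.

End TightRainbowPaths.

(* Witnesses: the shifts moving x to i * d + o with i < k and o < n - (k - 1) * d. *)
Lemma card_low_shifts n d k x : 0 < d -> 0 < k -> (k - 1) * d < n -> n <= k * d ->
  x < n ->
  k * (n - (k - 1) * d) <= #|[set t : 'I_n | ((x + t) %% n) %% d < n - (k - 1) * d]|.
Proof.
move=> d_gt0 k_gt0 lt_k1d_n le_n_kd lt_xn.
have n_gt0 : 0 < n by lia.
have ek : k * d = d + (k - 1) * d by rewrite -mulSn; congr (_ * _); lia.
have le_rd : n - (k - 1) * d <= d by lia.
set r := n - (k - 1) * d in le_rd *.
pose a (p : 'I_k * 'I_r) := p.1 * d + p.2.
have lt_an p : a p < n.
  have : p.1 * d <= (k - 1) * d by rewrite leq_mul2r; have := ltn_ord p.1; lia.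
  by have := ltn_ord p.2; rewrite /a /r; lia.
pose g (p : 'I_k * 'I_r) : 'I_n := Ordinal (ltn_pmod (a p + n - x) n_gt0).
have g_a p : (x + g p) %% n = a p.
  rewrite /= modnDmr (_ : x + (a p + n - x) = a p + n); last by have := lt_an p; lia.
  by rewrite modnDr modn_small.
have g_inj : injective g.
  move=> [i o] [i' o'] eq_g.
  have E : i * d + o = i' * d + o'.
    by have := g_a (i, o); rewrite eq_g g_a.
  have [lt_od lt_o'd] : o < d /\ o' < d by have := ltn_ord o; have := ltn_ord o'; lia.
  have Ei : (i * d + o) %/ d = (i' * d + o') %/ d by rewrite E.
  have Eo : (i * d + o) %% d = (i' * d + o') %% d by rewrite E.
  rewrite !divnMDl // !divn_small // !addn0 in Ei.
  rewrite !modnMDl !modn_small // in Eo.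
  by congr pair; apply: val_inj.
have := card_imset (mem setT) g_inj; rewrite cardsT card_prod !card_ord => <-.
apply: subset_leq_card; apply/subsetP => _ /imsetP [p _ ->].
rewrite inE g_a /a modnMDl modn_small; first exact: ltn_ord.
exact: leq_trans (ltn_ord p.2) le_rd.
Qed.

Lemma ratio_bound_rat k n d V A : 0 < d -> 0 < k -> (k - 1) * d < n ->
  V * (k * (n - (k - 1) * d)) <= n * A ->
  ((k%:Q * (n%:Q / d%:Q + 1 - k%:Q) / (n%:Q / d%:Q)) * V%:Q <= A%:Q)%R.
Proof.
move=> d_gt0 k_gt0 lt_k1d_n le_count.
have n_gt0 : 0 < n by lia.
rewrite -!pmulrn.
have -> : ((k%:R * (n%:R / d%:R + 1 - k%:R) / (n%:R / d%:R)) * V%:R : rat)%R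
    = ((V * (k * (n - (k - 1) * d)))%N%:R / n%:R)%R.
  rewrite natrM natrM natrB; last lia.
  rewrite natrM natrB; last lia.
  by field; rewrite !pnatr_eq0; apply/andP; split; lia.
by rewrite ler_pdivrMr ?ltr0n // -natrM ler_nat; lia.
Qed.

Theorem theorem2 (k n d : nat) (T : finType) (e : rel T) :
  0 < k -> 0 < n -> 0 < d -> 2 * d <= n -> coprime n d ->
  (n%:Q / d%:Q < k%:Q)%R ->
  simple_graph e -> connected_graph e ->
  chromatic_number e k ->
  circ_chromatic_number e (n%:Q / d%:Q)%R ->
  exists f : T -> nat, is_coloring e k f /\
    exists A : {set T},
      (forall u, u \in A ->
         exists p, rainbow_path e f p /\ size p = k /\ begins_at u p) /\
      ((k%:Q * (n%:Q / d%:Q + 1 - k%:Q) / (n%:Q / d%:Q)) * #|T|%:Q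
          <= #|A|%:Q)%R /\
      (forall v, v \notin A ->
         exists p, rainbow_path e f p /\ size p = k.-1 /\ begins_at v p).
Proof.
move=> k_gt0 n_gt0 d_gt0 le_2dn cop lt_ratio_k [e_sym _] e_conn [_ chi_min] chic.
have lt_n_kd : n < k * d.
  by move: lt_ratio_k; rewrite -!pmulrn ltr_pdivrMr ?ltr0n // -natrM ltr_nat.
have [c0 c0_col] := circ_col_of_circ_chromatic d_gt0 cop chic.
have lt_2dn : 2 * d < n.
  rewrite ltn_neqAle le_2dn andbT; apply/eqP => E.
  have d_1 : d = 1 by move: cop; rewrite -E /coprime gcdnC gcdnMl => /eqP.
  subst d; have := chromatic_le_circ_col chi_min d_gt0 n_gt0 c0_col (leq_pmulr n d_gt0).
  lia.
have [c [c_col tight_out]] := exists_tight_successors d_gt0 lt_2dn e_sym e_conn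
  (circ_chromatic_ratio_min chic) c0_col.
have lt_k1d_n : (k - 1) * d < n.
  rewrite ltnNge; apply/negP => le_n_k1d.
  by have := chromatic_le_circ_col chi_min d_gt0 n_gt0 c_col le_n_k1d; lia.
have k_gt1 : 1 < k by rewrite -(ltn_pmul2r d_gt0); lia.
pose low (t : 'I_n) v := ((c v + t) %% n) %% d < n - (k - 1) * d.
have [t dense_t] := exists_dense_index (Ordinal n_gt0) (fun v =>
  card_low_shifts (x := c v) d_gt0 k_gt0 lt_k1d_n (ltnW lt_n_kd) (proj1 c_col v)).
rewrite card_ord in dense_t.
exists (fun v => ((c v + t) %% n) %/ d + 1); split.
  exact: coloring_of_circ_col d_gt0 n_gt0 c_col (ltn_ord t) (ltnW lt_n_kd).
exists [set v | low t v]; split; [|split].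
- move=> u; rewrite inE => low_u.
  by apply: (tight_rainbow_path tight_out (k := k)) => //; right.
- exact: ratio_bound_rat d_gt0 k_gt0 lt_k1d_n dense_t.
- by move=> v _; apply: (tight_rainbow_path tight_out (k := k)) => //; lia.
Qed.
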